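(* For any connected non-complete graph $G$, $$\mu_t(G)\le n(G)-\gamma_c(G).$$
   Context: All graphs are finite, simple and undirected; $n(G)$ denotes the order of $G$. The connected domination number $\gamma_c(G)$ is the minimum cardinality of a dominating set $D$ of $G$ such that the induced subgraph $G[D]$ is connected. Let $G$ be a connected graph and $X\subseteq V(G)$. Two vertices $x,y\in V(G)$ are $X$-visible if there exists a shortest $x,y$-path in $G$ none of whose internal vertices (i.e., vertices other than $x$ and $y$) belongs to $X$. The set $X$ is a total mutual-visibility set of $G$ if every two vertices of $G$ are $X$-visible (the empty set is allowed). The total mutual-visibility number $\mu_t(G)$ is the maximum cardinality of a total mutual-visibility set of $G$. *)

From mathcomp Require Import all_boot.
From mathcomp Require Import boolp.
Set Implicit Arguments. Unset Strict Implicit. Unset Printing Implicit Defensive.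

Definition simple_graph (T : finType) (e : rel T) : Prop :=
  symmetric e /\ irreflexive e.

Definition connected_graph (T : finType) (e : rel T) : Prop :=
  forall x y : T, connect e x y.

Definition complete_graph (T : finType) (e : rel T) : Prop :=
  forall x y : T, x != y -> e x y.

(* A walk from x is the vertex list x :: p with consecutive vertices adjacent;
   its length is size p. *)
Definition is_walk (T : finType) (e : rel T) (x y : T) (p : seq T) : bool :=
  path e x p && (last x p == y).

Definition is_shortest (T : finType) (e : rel T) (x y : T) (p : seq T) : Prop :=
  is_walk e x y p /\ forall q, is_walk e x y q -> size p <= size q.

(* internal vertices of the walk x :: p (all except first and last) *)
Definition internal (T : Type) (p : seq T) : seq T := take (size p).-1 p.

Definition X_visible (T : finType) (e : rel T) (X : {set T}) (x y : T) : Prop :=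
  exists p, is_shortest e x y p /\ forall v, v \in internal p -> v \notin X.

Definition total_mutual_visibility (T : finType) (e : rel T) (X : {set T}) : Prop :=
  forall x y : T, X_visible e X x y.

Definition tmvb (T : finType) (e : rel T) (X : {set T}) : bool :=
  `[< total_mutual_visibility e X >].

Definition dominating (T : finType) (e : rel T) (D : {set T}) : bool :=
  [forall v, (v \in D) || [exists u in D, e v u]].

(* the induced subgraph G[D] is connected (the empty graph counts as connected
   here; irrelevant since D is dominating in a nonempty graph) *)
Definition induced_connected (T : finType) (e : rel T) (D : {set T}) : bool :=
  [forall u in D, forall v in D,
     connect [rel a b | [&& e a b, a \in D & b \in D]] u v].

Definition connected_dominating (T : finType) (e : rel T) (D : {set T}) : bool :=
  dominating e D && induced_connected e D.

(* connected domination number: minimum cardinality of a connected dominating set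
   (#|T| is a harmless default/upper bound: setT is connected dominating when G is connected) *)
Definition gamma_c (T : finType) (e : rel T) : nat :=
  \big[minn/#|T|]_(D : {set T} | connected_dominating e D) #|D|.

Definition mu_t (T : finType) (e : rel T) : nat :=
  \max_(X : {set T} | tmvb e X) #|X|.

From mathcomp Require Import all_boot all_order.
From mathcomp Require Import boolp zify.
Set Implicit Arguments. Unset Strict Implicit.

(* Let X be a total mutual-visibility set of a non-complete graph
   G.  We show that its complement ~: X is a connected dominating set, whence
   gamma_c G <= n(G) - |X| and thus |X| <= n(G) - gamma_c G.
   - Domination: if x, y are distinct and non-adjacent, a shortest x,y-path has
     an internal vertex, and its first internal vertex is a neighbour of x
     outside X.  A vertex v of X with a non-neighbour gets dominated this way;
     a vertex of X adjacent to everything is dominated by the neighbour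
     outside X produced from any non-adjacent pair, which exists since G is
     not complete.
   - Connectivity: two vertices outside X are joined by a shortest path whose
     internal vertices avoid X, i.e. by a path inside G[~: X]. *)

Lemma noncomplete_nonadjacent_pair (T : finType) (e : rel T) :
  ~ complete_graph e -> exists x y, x != y /\ ~~ e x y.
Proof.
move=> not_complete; apply: contrapT => no_pair.
apply: not_complete => a b neq_ab; apply: contrapT => nadj_ab.
by apply: no_pair; exists a, b; split => //; apply/negP.
Qed.

Section Visibility.

Variables (T : finType) (e : rel T) (X : {set T}).
Hypothesis tmvX : total_mutual_visibility e X.

(* Two distinct non-adjacent vertices see each other through a path of length
   at least 2, whose first internal vertex is a neighbour of x outside X. *)
Lemma nonadjacent_neighbour_outside (x y : T) :
  x != y -> ~~ e x y -> exists2 a, e x a & a \notin X.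
Proof.
move=> neq_xy nadj_xy.
have [p [[/andP[walk_p /eqP last_p] _] avoidX]] := tmvX x y.
case: p walk_p last_p avoidX => [|a p] /=.
  by move=> _ eq_xy; rewrite eq_xy eqxx in neq_xy.
move=> /andP[e_xa _] last_p avoidX; exists a => //.
case: p last_p avoidX => [|b q] /=.
  by move=> eq_ay; rewrite -eq_ay e_xa in nadj_xy.
by move=> _; apply; rewrite /internal /= mem_head.
Qed.

Lemma compl_tmv_dominating : ~ complete_graph e -> dominating e (~: X).
Proof.
move=> /noncomplete_nonadjacent_pair[x [y [neq_xy nadj_xy]]].
apply/forallP => v; rewrite in_setC; have [vX /=|//] := boolP (v \in X).
apply/existsP; have [/existsP[w /andP[neq_vw nadj_vw]]|universal] :=
  boolP [exists w, (v != w) && ~~ e v w].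
  have [a e_va aX] := nonadjacent_neighbour_outside neq_vw nadj_vw.
  by exists a; rewrite in_setC aX.
have [a _ aX] := nonadjacent_neighbour_outside neq_xy nadj_xy.
exists a; rewrite in_setC aX /=.
have neq_va : v != a by apply: contraNneq aX => <-.
by move/existsPn: universal => /(_ a); rewrite neq_va /= negbK.
Qed.

(* The complement of a total mutual-visibility set induces a connected
   subgraph: a visibility path between two vertices outside X lies outside X. *)
Lemma compl_tmv_induced_connected : induced_connected e (~: X).
Proof.
apply/forallP => u; apply/implyP => uD; apply/forallP => w; apply/implyP => wD.
have [p [[/andP[walk_p /eqP last_p] _] avoidX]] := tmvX u w.
apply/connectP; exists p => //.
have p_outside : all [in ~: X] (u :: p).
  apply/allP => v; rewrite in_cons => /orP[/eqP -> //|v_p].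
  case/lastP: p walk_p last_p avoidX v_p => [//|q l] _.
  rewrite last_rcons /internal size_rcons /= -cats1 take_size_cat //.
  move=> eq_lw avoidX; rewrite mem_cat mem_seq1 => /orP[v_q | /eqP ->].
    by rewrite in_setC avoidX.
  by rewrite eq_lw.
apply: (sub_in_path _ p_outside walk_p) => a b aD bD e_ab /=.
by rewrite e_ab aD bD.
Qed.

Lemma compl_tmv_connected_dominating :
  ~ complete_graph e -> connected_dominating e (~: X).
Proof.
move=> not_complete; apply/andP; split; first exact: compl_tmv_dominating.
exact: compl_tmv_induced_connected.
Qed.

End Visibility.

Lemma gamma_c_le (T : finType) (e : rel T) (D : {set T}) :
  connected_dominating e D -> gamma_c e <= #|D|.
Proof.
exact: (@Order.TotalTheory.bigmin_le_cond _ nat _ #|T| D _ (fun D => #|D|)).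
Qed.

(* Main theorem. *)
Theorem theorem2p4 (T : finType) (e : rel T) :
  simple_graph e -> connected_graph e -> ~ complete_graph e ->
  mu_t e <= #|T| - gamma_c e.
Proof.
move=> _ _ not_complete; apply/bigmax_leqP => X /asboolP tmvX.
have := gamma_c_le (compl_tmv_connected_dominating tmvX not_complete).
rewrite cardsCs setCK; have := max_card X; lia.
Qed.
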